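(* Let $S>0$, $I\ge1$, $J\in\{1,\dots,I\}$, $N_1,\dots,N_I$ positive integers and $\theta_1>\dots>\theta_I>0$. Consider the partial price differentiation problem: maximize $\sum_{i=1}^I n_ip_is_i$ over prices $p^1,\dots,p^J>0$, assignments $a_i^j\in\{0,1\}$ with $\sum_{j=1}^J a_i^j=1$ for each $i$, and $n_i\in\{0,\dots,N_i\}$, subject to $p_i=\sum_{j=1}^J a_i^jp^j$, $s_i=(\theta_i/p_i-1)^+$ for each $i$, and $\sum_{i=1}^I n_is_i\le S$. Call group $i$ effective if $n_is_i>0$, and for each $j$ call the set of effective groups $i$ with $a_i^j=1$ the $j$-th cluster. Then this problem has an optimal solution in which every cluster consists of consecutive integers, i.e. is of the form $\{l,l+1,\dots,m\}$ (or is empty).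
   Context: Group $i$ consists of $N_i$ users each with utility $\theta_i\ln(1+s)$; a user facing unit price $p$ demands $(\theta_i/p-1)^+$, where $(x)^+=\max(x,0)$. The service provider has total resource $S$ and may use at most $J$ distinct unit prices, each group being charged one of them. *)

From HB Require Import structures.
From mathcomp Require Import all_boot all_order all_algebra.
From mathcomp Require Import reals.
Set Implicit Arguments. Unset Strict Implicit. Unset Printing Implicit Defensive.
Import Order.TTheory GRing.Theory Num.Theory.
Local Open Scope ring_scope.

Definition pospart {R : realType} (x : R) : R := Num.max x 0.

Definition group_price {R : realType} {I J : nat}
  (p : 'I_J -> R) (a : 'I_I -> 'I_J -> nat) (i : 'I_I) : R :=
  \sum_(j < J) (a i j)%:R * p j.

Definition demand {R : realType} {I J : nat} (theta : 'I_I -> R)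
  (p : 'I_J -> R) (a : 'I_I -> 'I_J -> nat) (i : 'I_I) : R :=
  pospart (theta i / group_price p a i - 1).

Definition feasible {R : realType} {I J : nat} (S : R) (N : 'I_I -> nat)
  (theta : 'I_I -> R)
  (p : 'I_J -> R) (a : 'I_I -> 'I_J -> nat) (n : 'I_I -> nat) : Prop :=
  (forall j, 0 < p j)
  /\ (forall i j, (a i j == 0)%N || (a i j == 1)%N)
  /\ (forall i, (\sum_(j < J) a i j)%N = 1%N)
  /\ (forall i, (n i <= N i)%N)
  /\ \sum_(i < I) (n i)%:R * demand theta p a i <= S.

Definition revenue {R : realType} {I J : nat} (theta : 'I_I -> R)
  (p : 'I_J -> R) (a : 'I_I -> 'I_J -> nat) (n : 'I_I -> nat) : R :=
  \sum_(i < I) (n i)%:R * group_price p a i * demand theta p a i.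

Definition in_cluster {R : realType} {I J : nat} (theta : 'I_I -> R)
  (p : 'I_J -> R) (a : 'I_I -> 'I_J -> nat) (n : 'I_I -> nat)
  (j : 'I_J) (i : 'I_I) : Prop :=
  0 < (n i)%:R * demand theta p a i /\ a i j = 1%N.

Definition consecutive {I : nat} (C : 'I_I -> Prop) : Prop :=
  forall l k m : 'I_I, C l -> C m -> (l <= k)%N -> (k <= m)%N -> C k.

From mathcomp Require Import all_boot all_order all_algebra.
From mathcomp Require Import reals.
From mathcomp Require Import boolp classical_sets topology normedtype derive.
From mathcomp Require Import ring lra.
Set Implicit Arguments. Unset Strict Implicit. Unset Printing Implicit Defensive.
Import Order.TTheory GRing.Theory Num.Theory.
Import numFieldNormedType.Exports.
Local Open Scope ring_scope.

(* Existence: for each of the finitely many choices of assignment and user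
   counts, revenue is continuous in the price vector, and all prices can be
   clamped into a compact box [e, M] without changing demand or revenue
   (below [e] a single user exceeds the capacity, above [M] nobody buys).
   In an optimum, priced-out groups can be emptied and clusters with equal
   prices merged.  Three perturbations are then unprofitable: adding a user
   of an idle group whose valuation exceeds a cluster price, moving a group
   to another cluster while re-pricing the receiver at constant demand, and
   scaling two cluster prices in opposite directions at constant total
   demand.  The first fills the gaps of a cluster; if a group [k] with
   [l < k < m] sat in another cluster than [l] and [m], the balance equation
   from the third and the moves of [l], [k] and [m] would contradict
   [th l > th k > th m]. *)

Lemma finite_pos_lower_bound {R : realDomainType} {T : finType} (P : pred T) (f : T -> R) :
  (forall i, P i -> 0 < f i) -> exists2 d : R, 0 < d & forall i, P i -> d <= f i.
Proof.
move=> f0; exists (\big[Order.min/1]_(i | P i) f i).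
  elim/big_ind: _ => [|x y x0 y0|]; [exact: ltr01 | by rewrite lt_min x0 y0 | exact: f0].
by move=> i Pi; apply: bigmin_le_cond.
Qed.

Lemma sum_split_pair {R : nmodType} {J : nat} (F : 'I_J -> R) X Y : X != Y ->
  \sum_(j < J) F j = F X + F Y + \sum_(j | (j != X) && (j != Y)) F j.
Proof.
move=> XY; rewrite (bigD1 X) //= (bigD1 Y) /=; last by rewrite eq_sym.
by rewrite addrA.
Qed.

Section UserDemand.
Context {R : realType}.
Implicit Types x y t r : R.

Lemma pospart_ge0 x : 0 <= pospart x.
Proof. by rewrite /pospart le_max lexx orbT. Qed.

Lemma pospart_id x : 0 <= x -> pospart x = x.
Proof. by move=> x0; rewrite /pospart max_l. Qed.

Lemma pospart_eq0 x : x <= 0 -> pospart x = 0.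
Proof. by move=> x0; rewrite /pospart max_r. Qed.

Lemma pospart_ge x : x <= pospart x.
Proof. by rewrite /pospart le_max lexx. Qed.

Lemma le_pospart x y : x <= y -> pospart x <= pospart y.
Proof. by move=> xy; rewrite /pospart ge_max !le_max xy lexx !orbT. Qed.

Definition user_demand t r := pospart (t / r - 1).

Lemma user_demand_ge0 t r : 0 <= user_demand t r.
Proof. exact: pospart_ge0. Qed.

Lemma user_demand_ge t r : t / r - 1 <= user_demand t r.
Proof. exact: pospart_ge. Qed.

Lemma user_demandE t r : 0 < r -> r <= t -> user_demand t r = t / r - 1.
Proof. by move=> r0 rt; rewrite /user_demand pospart_id // subr_ge0 ler_pdivlMr // mul1r. Qed.

Lemma user_demand_eq0 t r : 0 < r -> t <= r -> user_demand t r = 0.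
Proof. by move=> r0 tr; rewrite /user_demand pospart_eq0 // subr_le0 ler_pdivrMr // mul1r. Qed.

Lemma user_demand_gt0 t r : 0 < r -> r < t -> 0 < user_demand t r.
Proof. by move=> r0 rt; rewrite user_demandE ?ltW // subr_gt0 ltr_pdivlMr // mul1r. Qed.

Lemma le_user_demand t r1 r2 : 0 <= t -> 0 < r1 -> r1 <= r2 ->
  user_demand t r2 <= user_demand t r1.
Proof.
move=> t0 r10 r12; apply: le_pospart; rewrite lerD2r ler_wpM2l //.
by rewrite lef_pV2 ?posrE // (lt_le_trans r10).
Qed.

Lemma mul_user_demand t r : 0 < r -> r * user_demand t r = pospart (t - r).
Proof.
move=> r0; have [rt|tr] := leP r t.
  rewrite user_demandE // pospart_id ?subr_ge0 //.
  by rewrite mulrBr mulr1 mulrCA divff ?mulr1 // gt_eqF.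
by rewrite user_demand_eq0 ?ltW // mulr0 pospart_eq0 // subr_le0 ltW.
Qed.

End UserDemand.

Lemma continuous_pospart {R : realType} {T : topologicalType} (f : T -> R) (x : T) :
  {for x, continuous f} -> {for x, continuous (fun y => pospart (f y))}.
Proof. by move=> cf; exact: (@continuous_max R T f (fun=> 0) x cf (cvg_cst _)). Qed.

Lemma continuous_user_demand {R : realType} (t r : R) : r != 0 -> {for r, continuous (user_demand t)}.
Proof.
move=> r0; apply: (@continuous_pospart R R (fun x => t / x - 1)).
apply: continuousB; last exact: cvg_cst.
by apply: continuousM; [exact: cvg_cst | exact: inv_continuous].
Qed.

Section Clusters.
Context {R : realType} {I J : nat} (th : 'I_I -> R).
Implicit Types (sg : 'I_I -> 'I_J) (n : 'I_I -> nat) (p : 'I_J -> R) (F : 'I_I -> R).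

Definition cluster_sum sg n F (j : 'I_J) : R := \sum_(i < I | sg i == j) (n i)%:R * F i.
Definition cluster_demand sg n j (r : R) := cluster_sum sg n (fun i => user_demand (th i) r) j.
Definition cluster_revenue sg n j (r : R) := cluster_sum sg n (fun i => pospart (th i - r)) j.
Definition cluster_valuation sg n j := cluster_sum sg n th j.
Definition cluster_size sg n j := cluster_sum sg n (fun=> 1) j.

Definition cluster_active sg n j (r : R) :=
  forall i, sg i = j -> (0 < n i)%N -> r < th i.

Definition total_demand sg n p := \sum_(i < I) (n i)%:R * user_demand (th i) (p (sg i)).
Definition total_revenue sg n p := \sum_(i < I) (n i)%:R * pospart (th i - p (sg i)).

Definition set_price p X (r : R) : 'I_J -> R := fun j => if j == X then r else p j.

Lemma sum_by_cluster sg n (G : 'I_J -> 'I_I -> R) :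
  \sum_(i < I) (n i)%:R * G (sg i) i = \sum_(j < J) cluster_sum sg n (G j) j.
Proof.
rewrite (partition_big sg predT) //=; apply: eq_bigr => j _.
by apply: eq_big => // i /eqP ->.
Qed.

Lemma total_demand_by_cluster sg n p :
  total_demand sg n p = \sum_(j < J) cluster_demand sg n j (p j).
Proof. exact: (sum_by_cluster sg n (fun j i => user_demand (th i) (p j))). Qed.

Lemma total_revenue_by_cluster sg n p :
  total_revenue sg n p = \sum_(j < J) cluster_revenue sg n j (p j).
Proof. exact: (sum_by_cluster sg n (fun j i => pospart (th i - p j))). Qed.

Lemma total_demand_split sg n p X :
  total_demand sg n p = cluster_demand sg n X (p X) + \sum_(j | j != X) cluster_demand sg n j (p j).
Proof. by rewrite total_demand_by_cluster (bigD1 X). Qed.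

Lemma total_revenue_split sg n p X :
  total_revenue sg n p = cluster_revenue sg n X (p X) + \sum_(j | j != X) cluster_revenue sg n j (p j).
Proof. by rewrite total_revenue_by_cluster (bigD1 X). Qed.

Section Reassign.
Variables (sg sg' : 'I_I -> 'I_J) (n n' : 'I_I -> nat) (g : 'I_I) (X : 'I_J).
Hypothesis agree : forall i, i != g -> sg' i = sg i /\ n' i = n i.
Hypothesis sg'g : sg' g = X.

Lemma cluster_sum_reassign F j :
  cluster_sum sg' n' F j = cluster_sum sg n F j + (X == j)%:R * (n' g)%:R * F g
                           - (sg g == j)%:R * (n g)%:R * F g.
Proof.
rewrite /cluster_sum !(big_mkcond (fun i => _ == j)) /= (bigD1 g) //= [in RHS](bigD1 g) //=.
rewrite [E in _ = _ + E + _ - _](eq_bigr (fun i => if sg' i == j then (n' i)%:R * F i else 0)).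
  by rewrite sg'g; case: (X == j); case: (sg g == j); rewrite /= ?mul1r ?mul0r; ring.
by move=> i ig; case: (agree ig) => -> ->.
Qed.

Lemma cluster_demand_reassign r : (sg g != X) || (n g == 0)%N ->
  cluster_demand sg' n' X r = cluster_demand sg n X r + (n' g)%:R * user_demand (th g) r.
Proof.
move=> gX; rewrite /cluster_demand cluster_sum_reassign eqxx mul1r.
by case/orP: gX => [/negbTE -> | /eqP ->]; rewrite /=; ring.
Qed.

Lemma sum_reassign_set_price p r (G : 'I_I -> R -> R) :
  \sum_(j < J) cluster_sum sg' n' (fun i => G i (set_price p X r j)) j
  = cluster_sum sg' n' (fun i => G i r) X
    + \sum_(j | j != X) cluster_sum sg n (fun i => G i (p j)) j
    - (sg g != X)%:R * ((n g)%:R * G g (p (sg g))).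
Proof.
rewrite (bigD1 X) //= /set_price eqxx -addrA; congr (_ + _).
rewrite (eq_bigr (fun j => cluster_sum sg n (fun i => G i (p j)) j
                         - (sg g == j)%:R * ((n g)%:R * G g (p j)))); last first.
  move=> j jX; rewrite (negbTE jX) cluster_sum_reassign [X == j]eq_sym (negbTE jX) mul0r mul0r addr0.
  by rewrite mulrA.
rewrite sumrB; congr (_ - _); have [->|gX] := eqVneq (sg g) X.
  by rewrite big1 ?mul0r // => j jX; rewrite eq_sym (negbTE jX) mul0r.
rewrite (bigD1 (sg g)) //= eqxx big1 ?addr0 // => j /andP [_ jg].
by rewrite eq_sym (negbTE jg) mul0r.
Qed.

Lemma total_demand_reassign p r :
  total_demand sg' n' (set_price p X r) = cluster_demand sg' n' X r
    + \sum_(j | j != X) cluster_demand sg n j (p j)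
    - (sg g != X)%:R * ((n g)%:R * user_demand (th g) (p (sg g))).
Proof.
rewrite total_demand_by_cluster.
exact: (sum_reassign_set_price p r (fun i x => user_demand (th i) x)).
Qed.

Lemma total_revenue_reassign p r :
  total_revenue sg' n' (set_price p X r) = cluster_revenue sg' n' X r
    + \sum_(j | j != X) cluster_revenue sg n j (p j)
    - (sg g != X)%:R * ((n g)%:R * pospart (th g - p (sg g))).
Proof.
rewrite total_revenue_by_cluster.
exact: (sum_reassign_set_price p r (fun i x => pospart (th i - x))).
Qed.

End Reassign.

Lemma cluster_sum_ge0 sg n F j : (forall i, 0 <= F i) -> 0 <= cluster_sum sg n F j.
Proof. by move=> F0; apply: sumr_ge0 => i _; rewrite mulr_ge0. Qed.

Lemma cluster_sum_ge_term sg n F j m : (forall i, 0 <= F i) -> sg m = j ->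
  (n m)%:R * F m <= cluster_sum sg n F j.
Proof.
move=> F0 mj; rewrite /cluster_sum (bigD1 m) ?mj ?eqxx //= lerDl.
by apply: sumr_ge0 => i _; rewrite mulr_ge0.
Qed.

Lemma ler_cluster_sum sg n F G j : (forall i, F i <= G i) ->
  cluster_sum sg n F j <= cluster_sum sg n G j.
Proof. by move=> FG; apply: ler_sum => i _; rewrite ler_wpM2l. Qed.

Lemma eq_cluster_sum sg n F G j : (forall i, sg i = j -> (0 < n i)%N -> F i = G i) ->
  cluster_sum sg n F j = cluster_sum sg n G j.
Proof.
move=> FG; apply: eq_bigr => i /eqP ij.
by have [->|ni] := posnP (n i); rewrite ?mul0r // FG.
Qed.

Lemma cluster_valuation_gt0 sg n j m : (forall i, 0 <= th i) ->
  sg m = j -> (0 < n m)%N -> 0 < th m -> 0 < cluster_valuation sg n j.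
Proof.
move=> th0 mj nm thm; apply: lt_le_trans (cluster_sum_ge_term n th0 mj).
by rewrite mulr_gt0 ?ltr0n.
Qed.

Lemma cluster_size_gt0 sg n j m : sg m = j -> (0 < n m)%N -> 0 < cluster_size sg n j.
Proof.
move=> mj nm; apply: lt_le_trans (cluster_sum_ge_term n (fun=> ler01) mj).
by rewrite mulr1 ltr0n.
Qed.

Lemma cluster_demand_ge0 sg n j r : 0 <= cluster_demand sg n j r.
Proof. by apply: cluster_sum_ge0 => i; apply: user_demand_ge0. Qed.

Lemma cluster_demand_ge sg n j r :
  cluster_valuation sg n j / r - cluster_size sg n j <= cluster_demand sg n j r.
Proof.
rewrite /cluster_valuation /cluster_size /cluster_sum mulr_suml -sumrB.
by apply: ler_sum => i _; rewrite -mulrA -mulrBr ler_wpM2l ?user_demand_ge.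
Qed.

Lemma cluster_demandE sg n j r : 0 < r -> cluster_active sg n j r ->
  cluster_demand sg n j r = cluster_valuation sg n j / r - cluster_size sg n j.
Proof.
move=> r0 act; rewrite /cluster_demand (eq_cluster_sum (G := fun i => th i / r - 1)).
  rewrite /cluster_valuation /cluster_size /cluster_sum mulr_suml -sumrB.
  by apply: eq_bigr => i _; rewrite mulrBr mulr1 mulrA.
by move=> i ij ni; rewrite user_demandE // ltW // act.
Qed.

Lemma cluster_revenueE sg n j r : cluster_active sg n j r ->
  cluster_revenue sg n j r = cluster_valuation sg n j - r * cluster_size sg n j.
Proof.
move=> act; rewrite /cluster_revenue (eq_cluster_sum (G := fun i => th i - r)).
  rewrite /cluster_valuation /cluster_size /cluster_sum mulr_sumr -sumrB.
  by apply: eq_bigr => i _; rewrite mulrBr mulr1 [r * _]mulrC.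
by move=> i ij ni; rewrite pospart_id // subr_ge0 ltW // act.
Qed.

Lemma cluster_revenue_demand sg n j r : 0 < r ->
  cluster_revenue sg n j r = r * cluster_demand sg n j r.
Proof.
move=> r0; rewrite /cluster_revenue /cluster_demand /cluster_sum mulr_sumr.
by apply: eq_bigr => i _; rewrite mulrCA mul_user_demand.
Qed.

Lemma le_cluster_demand sg n j r1 r2 : (forall i, 0 <= th i) -> 0 < r1 -> r1 <= r2 ->
  cluster_demand sg n j r2 <= cluster_demand sg n j r1.
Proof. by move=> th0 r10 r12; apply: ler_cluster_sum => i; apply: le_user_demand. Qed.

Lemma cluster_demand_eq0 sg n j r : 0 < r -> (forall i, th i <= r) ->
  cluster_demand sg n j r = 0.
Proof.
by move=> r0 thr; rewrite /cluster_demand /cluster_sum big1 // => i _; rewrite user_demand_eq0 ?mulr0.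
Qed.

End Clusters.

Section Problem.
Context {R : realType} {I J : nat} (S : R) (N : 'I_I -> nat) (th : 'I_I -> R).
Implicit Types (sg : 'I_I -> 'I_J) (n : 'I_I -> nat) (p : 'I_J -> R).

(* [sg i] is the index of the price charged to group [i], and [n i] its number of users. *)
Definition admissible sg n p :=
  (forall j, 0 < p j) /\ (forall i, (n i <= N i)%N) /\ total_demand th sg n p <= S.

Definition optimal sg n p := admissible sg n p /\
  forall sg' n' p', admissible sg' n' p' -> total_revenue th sg' n' p' <= total_revenue th sg n p.

End Problem.

Section PriceCap.
Context {R : realType} {I J : nat} (th : 'I_I -> R).
Hypothesis th_ge0 : forall i, 0 <= th i.

(* For [x >= 0], nobody buys at price [price_cap x] or above. *)
Definition price_cap (x : R) := \sum_(i < I) th i + x.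

Lemma price_cap_ge x : x <= price_cap x.
Proof. by rewrite /price_cap lerDr sumr_ge0. Qed.

Lemma th_le_price_cap x i : 0 <= x -> th i <= price_cap x.
Proof.
move=> x0; rewrite /price_cap (bigD1 i) //= -addrA lerDl addr_ge0 //.
exact: sumr_ge0.
Qed.

Lemma continuous_cluster_demand (sg : 'I_I -> 'I_J) n j (r : R) : r != 0 ->
  {for r, continuous (cluster_demand th sg n j)}.
Proof.
move=> r0; apply: (@cvg_big R 'I_I +%R 0 _ add_continuous R (nbhs r)) => i _.
by apply: cvgM; [exact: cvg_cst | exact: continuous_user_demand].
Qed.

Lemma cluster_demand_attains (sg : 'I_I -> 'I_J) n j (lo T : R) : 0 < lo ->
  0 <= T <= cluster_demand th sg n j lo -> exists2 r, lo <= r & cluster_demand th sg n j r = T.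
Proof.
move=> lo0 /andP [T0 Tlo]; have lo_cap := price_cap_ge lo.
have cont : {within `[lo, price_cap lo], continuous (cluster_demand th sg n j)}%classic.
  apply: continuous_in_subspaceT => x; rewrite inE /= in_itv /= => /andP [lox _].
  by apply: continuous_cluster_demand; rewrite gt_eqF // (lt_le_trans lo0 lox).
have [|r] := IVT lo_cap cont (v := T).
  rewrite (cluster_demand_eq0 sg n j (r := price_cap lo)) ?(lt_le_trans lo0 lo_cap) //.
    by rewrite ge_min le_max T0 Tlo orbT.
  by move=> i; apply: th_le_price_cap; rewrite ltW.
by rewrite in_itv /= => /andP [lor _] <-; exists r.
Qed.

End PriceCap.


Section Existence.
Context {R : realType} {I J : nat} (S : R) (N : 'I_I -> nat) (th : 'I_I -> R).
Hypothesis S_gt0 : 0 < S.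
Hypothesis th_gt0 : forall i, 0 < th i.
Implicit Types (sg : 'I_I -> 'I_J) (n : 'I_I -> nat) (p : 'I_J -> R).

Let th_ge0 i : 0 <= th i := ltW (th_gt0 i).

(* A single user facing a price below [th i / (S + 1)] already demands more than [S]. *)
Lemma admissible_price_ge (e : R) sg n p : (forall i, e <= th i / (S + 1)) ->
  admissible S N th sg n p -> forall i, (0 < n i)%N -> e <= p (sg i).
Proof.
move=> he [p0 [_ dS]] i ni; rewrite leNgt; apply/negP => pe.
have S1 : 0 < S + 1 by rewrite addr_gt0.
have pi0 := p0 (sg i); have e0 := lt_trans pi0 pe.
have : S + 1 < th i / p (sg i).
  apply: le_lt_trans (_ : th i / e < _); last by rewrite ltr_pM2l ?ltf_pV2 ?posrE.
  by have := he i; rewrite !ler_pdivlMr // mulrC.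
rewrite -ltrBrDr => /lt_le_trans/(_ (user_demand_ge _ _)) Sd.
move: dS; apply/negP; rewrite -ltNge; apply: lt_le_trans Sd _.
rewrite /total_demand (bigD1 i) //= -[X in X <= _]addr0 lerD //; last first.
  by apply: sumr_ge0 => k _; rewrite mulr_ge0 ?user_demand_ge0.
by rewrite ler_peMl ?user_demand_ge0 // ler1n.
Qed.

Definition clamp (e M x : R) := Num.min (Num.max x e) M.

Lemma clamp_in (e M x : R) : e <= M -> e <= clamp e M x <= M.
Proof. by move=> eM; rewrite /clamp le_min ge_min le_max !lexx eM !orbT. Qed.

Lemma clamp_demand_revenue (e M t x : R) : 0 < e -> e <= x -> t <= M -> e <= M ->
  user_demand t (clamp e M x) = user_demand t x /\ pospart (t - clamp e M x) = pospart (t - x).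
Proof.
move=> e0 ex tM eM; rewrite /clamp max_l //; have [//|Mx] := leP x M.
have M0 := lt_le_trans e0 eM; have tx := ltW (le_lt_trans tM Mx).
by rewrite !user_demand_eq0 ?(lt_trans M0 Mx) // !pospart_eq0 ?subr_le0.
Qed.

Lemma totals_clamp (e M : R) sg n p : 0 < e -> (forall i, e <= th i / (S + 1)) ->
  (forall i, th i <= M) -> e <= M -> admissible S N th sg n p ->
  total_demand th sg n (fun j => clamp e M (p j)) = total_demand th sg n p /\
  total_revenue th sg n (fun j => clamp e M (p j)) = total_revenue th sg n p.
Proof.
move=> e0 he thM eM Ap; have pe := admissible_price_ge he Ap.
split; apply: eq_bigr => i _; have [->|ni] := posnP (n i); rewrite ?mul0r //;
  by have [d r] := clamp_demand_revenue e0 (pe i ni) (thM i) eM; rewrite ?d ?r.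
Qed.

Lemma continuous_total_revenue sg n (v : 'rV[R]_J) :
  {for v, continuous (fun w : 'rV[R]_J => total_revenue th sg n (fun j => w ord0 j))}.
Proof.
apply: (@cvg_big R 'I_I +%R 0 _ add_continuous _ (nbhs v)) => i _.
apply: cvgM; first exact: cvg_cst.
apply: (@continuous_pospart R _ (fun w : 'rV[R]_J => th i - w ord0 (sg i))).
apply: continuousB; first exact: cst_continuous.
exact: coord_continuous.
Qed.

Lemma continuous_total_demand_floor (e : R) sg n (v : 'rV[R]_J) : 0 < e ->
  {for v, continuous (fun w : 'rV[R]_J => total_demand th sg n (fun j => Num.max (w ord0 j) e))}.
Proof.
move=> e0; apply: (@cvg_big R 'I_I +%R 0 _ add_continuous _ (nbhs v)) => i _.
apply: cvgM; first exact: cvg_cst.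
have coord : {for v, continuous (fun w : 'rV[R]_J => w ord0 (sg i))}.
  exact: coord_continuous.
apply: (@continuous_comp _ _ _ (fun w : 'rV[R]_J => Num.max (w ord0 (sg i)) e)).
  by apply: continuous_max; [exact: coord | exact: cst_continuous].
by apply: continuous_user_demand; rewrite gt_eqF // lt_max e0 orbT.
Qed.

Lemma best_prices sg n : (forall i, (n i <= N i)%N) ->
  exists2 p, admissible S N th sg n p &
    forall p', admissible S N th sg n p' -> total_revenue th sg n p' <= total_revenue th sg n p.
Proof.
move=> nN; have [e e0 he] : exists2 e : R, 0 < e & forall i, e <= th i / (S + 1).
  have [e e0 he] := @finite_pos_lower_bound R _ xpredT (fun i => th i / (S + 1))
    (fun i _ => divr_gt0 (th_gt0 i) (addr_gt0 S_gt0 ltr01)).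
  by exists e => // i; exact: he.
pose M := price_cap th e.
have thM i : th i <= M by apply: th_le_price_cap => //; exact: ltW.
have eM : e <= M := price_cap_ge th_ge0 e.
pose box := [set v : 'rV[R]_J | forall j, `[e, M] (v ord0 j)]%classic.
(* Continuous everywhere, and equal to the demand on [box]; hence [K] is closed. *)
pose floor_demand (v : 'rV[R]_J) := total_demand th sg n (fun j => Num.max (v ord0 j) e).
pose K := (box `&` [set v | floor_demand v <= S])%classic.
have floorE v : box v -> floor_demand v = total_demand th sg n (fun j => v ord0 j).
  move=> bv; apply: eq_bigr => i _; congr (_ * user_demand _ _).
  by have := bv (sg i); rewrite /= in_itv /= => /andP [ev _]; rewrite max_l.
have K_compact : compact K.
  apply: compact_closedI.
    by apply: (@rV_compact _ _ (fun=> `[e, M]%classic)) => j; exact: segment_compact.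
  apply: (@preimage_closed _ _ floor_demand [set x | x <= S]); last exact: closed_le.
  by move=> v _; exact: continuous_total_demand_floor.
have K_cap : K (\row_j M).
  have bM : box (\row_j M) by move=> j; rewrite /= mxE in_itv /= eM lexx.
  split => //=; rewrite floorE // /total_demand big1 ?ltW // => i _.
  by rewrite mxE user_demand_eq0 ?mulr0 // (lt_le_trans e0 eM).
have cont : {within K, continuous (fun v => total_revenue th sg n (fun j => v ord0 j))}%classic.
  by apply: continuous_subspaceT => v; exact: continuous_total_revenue.
have [v Kv vmax] := EVT_max_rV (ex_intro _ _ K_cap) K_compact cont.
move: Kv; rewrite inE => -[bv dv]; exists (fun j => v ord0 j).
  split; last by split => //; rewrite -floorE.
  by move=> j; have := bv j; rewrite /= in_itv /= => /andP [ev _]; exact: lt_le_trans ev.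
move=> p' Ap'; have [cd cr] := totals_clamp e0 he thM eM Ap'.
pose w := \row_j clamp e M (p' j).
have wE : (fun j => w ord0 j) = (fun j => clamp e M (p' j)) by apply/funext => j; rewrite mxE.
have bw : box w by move=> j; rewrite /= mxE in_itv /= clamp_in.
rewrite -cr -wE; apply: vmax; rewrite inE; split => //=.
by rewrite floorE // wE cd; case: Ap' => _ [].
Qed.

Lemma exists_optimal (j0 : 'I_J) : exists sg n p, optimal S N th sg n p.
Proof.
(* As [N i < K], the finite type [plan] covers every assignment with [n <= N]. *)
pose K := (\sum_(i < I) N i).+1.
pose plan := ({ffun 'I_I -> 'I_J} * {ffun 'I_I -> 'I_K})%type.
pose sg_of (c : plan) : 'I_I -> 'I_J := fun i => c.1 i.
pose n_of (c : plan) : 'I_I -> nat := fun i => c.2 i.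
pose valid (c : plan) := [forall i, (n_of c i <= N i)%N].
have best c : exists p, valid c -> admissible S N th (sg_of c) (n_of c) p /\
    forall p', admissible S N th (sg_of c) (n_of c) p' ->
      total_revenue th (sg_of c) (n_of c) p' <= total_revenue th (sg_of c) (n_of c) p.
  have [/forallP vc|_] := boolP (valid c); last by exists (fun=> 1).
  by have [p Ap pmax] := best_prices (sg_of c) vc; exists p => _; split.
have [pb hpb] := choice best.
pose value c := if valid c then total_revenue th (sg_of c) (n_of c) (pb c) else -1.
pose c0 : plan := ([ffun=> j0], [ffun=> ord0]).
have vc0 : valid c0 by apply/forallP => i; rewrite /n_of ffunE.
have [cs _ csmax] := @arg_maxP _ _ _ c0 xpredT value isT.
have value_ge0 c : valid c -> 0 <= value c.
  by move=> vc; rewrite /value vc sumr_ge0 // => i _; rewrite mulr_ge0 ?pospart_ge0.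
have vcs : valid cs.
  apply: contraTT (csmax c0 isT) => /negbTE ncs; rewrite -ltNge /value ncs.
  exact: lt_le_trans (ltrN10 R) (value_ge0 _ vc0).
have [Acs csbest] := hpb cs vcs; exists (sg_of cs), (n_of cs), (pb cs).
split => // sg' n' p' Ap'; have [_ [nN' _]] := Ap'.
pose c : plan := ([ffun i => sg' i], [ffun i => inord (n' i)]).
have sgE : sg_of c = sg' by apply/funext => i; rewrite /sg_of ffunE.
have nE : n_of c = n'.
  apply/funext => i; rewrite /n_of ffunE inordK // ltnS (leq_trans (nN' i)) //.
  by rewrite (bigD1 i) //= leq_addr.
have vc : valid c by apply/forallP => i; rewrite nE.
have := csmax c isT; rewrite /value vc vcs; apply: le_trans.
by have [_] := hpb c vc; rewrite sgE nE; apply.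
Qed.

End Existence.

Section Algebra.
Variable R : realFieldType.

(* A cluster of valuation [a] and size [b] at price [x] takes in [nu] users of
   valuation [t] who paid [y]; [r] is the new price keeping the joint demand [T]. *)
Lemma reprice_gain_gt0 (a b nu t x y r T : R) : 0 <= b -> 0 < nu -> 0 < x -> 0 < y ->
  0 < r -> T = a / x - b + nu * (t / y - 1) -> 0 <= T ->
  (a + nu * t) / r - (b + nu) <= T -> 0 < (y - x) * (y * a - x * b * t) ->
  0 < r * T - (a - x * b) - nu * (t - y).
Proof.
move=> b0 nu0 x0 y0 r0 TE T0 Tr gain.
pose D := a / x + nu * t / y.
have TD : T = D - b - nu by rewrite TE /D; field; rewrite ?gt_eqF.
have D0 : 0 < D.
  have -> : D = T + b + nu by rewrite TD; ring.
  by rewrite -addrA ltr_wpDl // ltr_wpDl.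
have key : 0 < (x * b + nu * y) * D - (a + nu * t) * (b + nu).
  have -> : (x * b + nu * y) * D - (a + nu * t) * (b + nu) =
            nu * ((y - x) * (y * a - x * b * t)) / (x * y) by rewrite /D; field; rewrite ?gt_eqF.
  by apply: divr_gt0; rewrite mulr_gt0.
have rD : a + nu * t <= r * D.
  by rewrite [r * D]mulrC -ler_pdivrMr //; move: Tr; rewrite TD; lra.
have : 0 < D * (r * T - (a - x * b) - nu * (t - y)).
  have -> : D * (r * T - (a - x * b) - nu * (t - y)) =
      (r * D - (a + nu * t)) * T + ((x * b + nu * y) * D - (a + nu * t) * (b + nu)).
    by rewrite TD; ring.
  by rewrite ltr_wpDl // mulr_ge0 // subr_ge0.
by rewrite pmulr_rgt0.
Qed.

Lemma rescale_pair (a1 a2 b1 b2 d : R) : 0 < a1 -> 0 < a2 -> 0 < b1 -> 0 < b2 -> 0 < d ->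
  a2 * b1 < a1 * b2 -> exists al be : R,
  [/\ 1 < al < 1 + d, 0 < be < 1, a1 / al + a2 / be = a1 + a2 & al * b1 + be * b2 < b1 + b2].
Proof.
move=> a10 a20 b10 b20 d0 lt_ab.
pose c := (a1 * b2 - a2 * b1) / (b1 * (a1 + a2)).
have c0 : 0 < c by rewrite divr_gt0 ?subr_gt0 // mulr_gt0 // addr_gt0.
pose h := Num.min (d / 2) (c / 2).
have h0 : 0 < h by rewrite /h lt_min; apply/andP; split; apply: divr_gt0.
have half (x : R) : 0 < x -> x / 2 < x by move=> x0; rewrite ltr_pdivrMr // ltr_pMr // ltr1n.
have hd : h < d by rewrite /h gt_min half.
have hc : h < c by rewrite /h gt_min half ?orbT.
pose D := a2 * (1 + h) + a1 * h.
have D0 : 0 < D by rewrite addr_gt0 // mulr_gt0 // addr_gt0.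
exists (1 + h), (a2 * (1 + h) / D); split.
- by rewrite ltrDl h0 ltrD2l.
- have be0 : 0 < a2 * (1 + h) / D by rewrite divr_gt0 // mulr_gt0 // addr_gt0.
  by rewrite be0 ltr_pdivrMr // mul1r /D ltrDl mulr_gt0.
- by rewrite /D; field; rewrite !gt_eqF // ?addr_gt0 // mulr_gt0 // addr_gt0.
rewrite -subr_gt0.
have -> : b1 + b2 - ((1 + h) * b1 + a2 * (1 + h) / D * b2) = h * (b2 * a1 - b1 * D) / D.
  by rewrite /D; field; rewrite gt_eqF.
rewrite divr_gt0 // mulr_gt0 // subr_gt0 /D.
by move: hc; rewrite /c ltr_pdivlMr ?mulr_gt0 ?addr_gt0 //; lra.
Qed.

(* By the balance equation, [move_k] and [move_l] give [tl <= tk] if [x < y],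
   while [move_k] and [move_m] give [tk <= tm] if [y < x]. *)
Lemma interleaved_clusters_absurd (x y AX BX AY BY tl tk tm : R) :
  0 < x -> 0 < y -> 0 < BX -> 0 < BY -> x != y ->
  AX * y ^+ 2 * BY = AY * x ^+ 2 * BX -> tk < tl -> tm < tk ->
  (y - x) * (y * AX - x * BX * tk) <= 0 -> (x - y) * (x * AY - y * BY * tl) <= 0 ->
  (x - y) * (x * AY - y * BY * tm) <= 0 -> False.
Proof.
move=> x0 y0 BX0 BY0 xy balance lt_kl lt_mk move_k move_l move_m.
have K0 : 0 < x * BX * (y * BY) by rewrite !mulr_gt0.
have e1 : x * BX * (x * AY) = y * BY * (y * AX).
  apply/eqP; rewrite -subr_eq0.
  have -> : x * BX * (x * AY) - y * BY * (y * AX) = AY * x ^+ 2 * BX - AX * y ^+ 2 * BY by ring.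
  by rewrite balance subrr.
case: (ltgtP x y) xy => // [xy|yx] _.
- move: move_k; rewrite pmulr_rle0 ?subr_gt0 // subr_le0 => hk.
  move: move_l; rewrite nmulr_rle0 ?subr_lt0 // subr_ge0 => hl.
  suff : x * BX * (y * BY) * tl <= x * BX * (y * BY) * tk by rewrite ler_pM2l // leNgt lt_kl.
  have -> : x * BX * (y * BY) * tl = x * BX * (y * BY * tl) by ring.
  have -> : x * BX * (y * BY) * tk = y * BY * (x * BX * tk) by ring.
  apply: le_trans (ler_wpM2l (ltW (mulr_gt0 x0 BX0)) hl) _.
  by rewrite e1 ler_wpM2l // ltW // mulr_gt0.
- move: move_k; rewrite nmulr_rle0 ?subr_lt0 // subr_ge0 => hk.
  move: move_m; rewrite pmulr_rle0 ?subr_gt0 // subr_le0 => hm.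
  suff : x * BX * (y * BY) * tk <= x * BX * (y * BY) * tm by rewrite ler_pM2l // leNgt lt_mk.
  have -> : x * BX * (y * BY) * tm = x * BX * (y * BY * tm) by ring.
  have -> : x * BX * (y * BY) * tk = y * BY * (x * BX * tk) by ring.
  apply: le_trans _ (ler_wpM2l (ltW (mulr_gt0 x0 BX0)) hm).
  by rewrite e1 ler_wpM2l // ltW // mulr_gt0.
Qed.

End Algebra.

Section Optimality.
Context {R : realType} {I J : nat} (S : R) (N : 'I_I -> nat) (th : 'I_I -> R).
Hypothesis th_gt0 : forall i, 0 < th i.
Implicit Types (sg : 'I_I -> 'I_J) (n : 'I_I -> nat) (p : 'I_J -> R).

Let th_ge0 i : 0 <= th i := ltW (th_gt0 i).

Definition all_active sg n p := forall i, (0 < n i)%N -> p (sg i) < th i.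

Lemma all_active_cluster sg n p j : all_active sg n p -> cluster_active th sg n j (p j).
Proof. by move=> act i <-; exact: act. Qed.

(* Otherwise one more user of [k] joins cluster [X], whose price rises until
   its demand is back to its old value: strictly more revenue. *)
Lemma optimal_serves sg n p X m k : optimal S N th sg n p ->
  sg m = X -> (0 < n m)%N -> p X < th m -> (0 < N k)%N -> p X < th k -> (0 < n k)%N.
Proof.
move=> [[p0 [nN dS]] popt] mX nm pm Nk pk; rewrite lt0n; apply/negP => /eqP nk.
pose sg' i := if i == k then X else sg i.
pose n' i := if i == k then 1%N else n i.
have agree i : i != k -> sg' i = sg i /\ n' i = n i by rewrite /sg' /n' => /negbTE ->.
have sg'k : sg' k = X by rewrite /sg' eqxx.
have demand' r : cluster_demand th sg' n' X r = cluster_demand th sg n X r + user_demand (th k) r.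
  by rewrite (cluster_demand_reassign _ agree sg'k) ?nk ?orbT // /n' eqxx mul1r.
pose T := cluster_demand th sg n X (p X).
have T0 : 0 < T.
  apply: lt_le_trans (cluster_sum_ge_term n (fun i => user_demand_ge0 _ _) mX).
  by rewrite mulr_gt0 ?ltr0n ?user_demand_gt0.
have [r pXr rT] : exists2 r, p X <= r & cluster_demand th sg' n' X r = T.
  by apply: (cluster_demand_attains th_ge0) => //; rewrite ltW //= demand' lerDl user_demand_ge0.
have r0 := lt_le_trans (p0 X) pXr.
have Ar : admissible S N th sg' n' (set_price p X r).
  split; first by move=> j; rewrite /set_price; case: ifP.
  split; first by move=> i; rewrite /n'; case: eqP => [-> //|_]; exact: nN.
  by rewrite (total_demand_reassign _ agree sg'k) nk mul0r mulr0 subr0 rT -total_demand_split.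
have := popt _ _ _ Ar; rewrite (total_revenue_reassign _ agree sg'k) nk mul0r mulr0 subr0.
rewrite (total_revenue_split th sg n p X) lerD2r !cluster_revenue_demand // rT ler_pM2r // => rpX.
have rE : r = p X by apply/eqP; rewrite eq_le rpX pXr.
by move: rT; rewrite rE demand' -/T => /eqP; rewrite addrC -subr_eq0 addrK gt_eqF ?user_demand_gt0.
Qed.

(* Moving group [g] from cluster [Y] to cluster [X], with the price of [X]
   adjusted so that the joint demand is unchanged, must not pay. *)
Lemma optimal_no_profitable_move sg n p X Y g : optimal S N th sg n p -> all_active sg n p ->
  sg g = Y -> X != Y -> (0 < n g)%N ->
  (p Y - p X) * (p Y * cluster_valuation th sg n X - p X * cluster_size sg n X * th g) <= 0.
Proof.
move=> [[p0 [nN dS]] popt] act gY XY ng; rewrite leNgt; apply/negP => gain.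
pose sg' i := if i == g then X else sg i.
have agree i : i != g -> sg' i = sg i /\ n i = n i by rewrite /sg' => /negbTE ->.
have sg'g : sg' g = X by rewrite /sg' eqxx.
have gX : sg g != X by rewrite gY eq_sym.
have demand' r :
    cluster_demand th sg' n X r = cluster_demand th sg n X r + (n g)%:R * user_demand (th g) r.
  by rewrite (cluster_demand_reassign _ agree sg'g) ?gX.
pose T := cluster_demand th sg n X (p X) + (n g)%:R * user_demand (th g) (p Y).
have lo0 : 0 < Num.min (p X) (p Y) by rewrite lt_min !p0.
have [r lo_r rT] : exists2 r, Num.min (p X) (p Y) <= r & cluster_demand th sg' n X r = T.
  apply: (cluster_demand_attains th_ge0) => //.
  rewrite addr_ge0 ?mulr_ge0 ?cluster_demand_ge0 ?user_demand_ge0 //= demand'.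
  by rewrite lerD ?ler_wpM2l ?le_cluster_demand ?le_user_demand // ge_min lexx ?orbT.
have r0 := lt_le_trans lo0 lo_r.
have Ar : admissible S N th sg' n (set_price p X r).
  split; first by move=> j; rewrite /set_price; case: ifP.
  split => //; rewrite (total_demand_reassign _ agree sg'g) rT gX gY mul1r /T.
  by rewrite addrAC addrK -total_demand_split.
have := popt _ _ _ Ar; rewrite (total_revenue_reassign _ agree sg'g) gX gY mul1r.
rewrite cluster_revenue_demand // rT (total_revenue_split th sg n p X) addrAC lerD2r.
have pYg : p Y < th g by rewrite -gY act.
rewrite (cluster_revenueE (all_active_cluster act)) pospart_id; last by rewrite subr_ge0 ltW.
apply/negP; rewrite -ltNge -subr_gt0 addrAC.
have TE : T = cluster_valuation th sg n X / p X - cluster_size sg n X + (n g)%:R * (th g / p Y - 1).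
  by rewrite /T (cluster_demandE (p0 X) (all_active_cluster act)) user_demandE // ltW.
apply: (reprice_gain_gt0 _ _ (p0 X) (p0 Y) r0 TE _ _ gain); rewrite ?ltr0n //.
- by apply: cluster_sum_ge0 => i; exact: ler01.
- by rewrite -rT cluster_demand_ge0.
rewrite -rT demand'; apply: le_trans (lerD (cluster_demand_ge th sg n X r)
  (ler_wpM2l (ler0n _ (n g)) (user_demand_ge (th g) r))).
by rewrite le_eqVlt; apply/orP; left; apply/eqP; ring.
Qed.

Lemma all_active_raise sg n p X : (forall j, 0 < p j) -> all_active sg n p ->
  exists2 d : R, 0 < d & forall al, al < 1 + d -> cluster_active th sg n X (al * p X).
Proof.
move=> p0 act; have [i /andP [/eqP iX ni]|d d0 hd] := @finite_pos_lower_bound _ _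
    (fun i => (sg i == X) && (0 < n i)%N) (fun i => th i / p X - 1).
  by rewrite subr_gt0 ltr_pdivlMr // mul1r -iX act.
exists d => // al ald i iX ni; have := hd i; rewrite iX eqxx ni => /(_ isT).
rewrite lerBrDr ler_pdivlMr // => le_th; apply: lt_le_trans le_th.
by rewrite ltr_pM2r // addrC.
Qed.

(* Otherwise raising the price of [X] and lowering that of [Y], at constant
   total demand, increases the revenue (first-order optimality). *)
Lemma optimal_cluster_balance_le sg n p X Y mX mY :
  optimal S N th sg n p -> all_active sg n p -> X != Y ->
  sg mX = X -> (0 < n mX)%N -> sg mY = Y -> (0 < n mY)%N ->
  cluster_valuation th sg n X / p X * (p Y * cluster_size sg n Y)
    <= cluster_valuation th sg n Y / p Y * (p X * cluster_size sg n X).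
Proof.
move=> [[p0 [nN dS]] popt] act XY mXX nmX mYY nmY; rewrite leNgt; apply/negP => lt_ab.
set AX := cluster_valuation th sg n X in lt_ab *; set AY := cluster_valuation th sg n Y in lt_ab *.
set BX := cluster_size sg n X in lt_ab *; set BY := cluster_size sg n Y in lt_ab *.
have [x0 y0] := (p0 X, p0 Y).
have AX0 : 0 < AX := cluster_valuation_gt0 th_ge0 mXX nmX (th_gt0 _).
have AY0 : 0 < AY := cluster_valuation_gt0 th_ge0 mYY nmY (th_gt0 _).
have BX0 : 0 < BX := cluster_size_gt0 mXX nmX.
have BY0 : 0 < BY := cluster_size_gt0 mYY nmY.
have [d d0 raiseX] := all_active_raise X p0 act.
have [al [be [/andP [al1 ald] /andP [be0 be1] demandE gain]]] := rescale_pair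
  (divr_gt0 AX0 x0) (divr_gt0 AY0 y0) (mulr_gt0 x0 BX0) (mulr_gt0 y0 BY0) d0 lt_ab.
pose p' := set_price (set_price p X (al * p X)) Y (be * p Y).
have p'X : p' X = al * p X by rewrite /p' /set_price (negbTE XY) eqxx.
have p'Y : p' Y = be * p Y by rewrite /p' /set_price eqxx.
have rest (G : 'I_J -> R -> R) :
    \sum_(j | (j != X) && (j != Y)) G j (p' j) = \sum_(j | (j != X) && (j != Y)) G j (p j).
  by apply: eq_bigr => j /andP [jX jY]; rewrite /p' /set_price (negbTE jX) (negbTE jY).
have actX := raiseX al ald.
have actX0 := all_active_cluster (j := X) act.
have actY0 := all_active_cluster (j := Y) act.
have actY : cluster_active th sg n Y (be * p Y).
  by move=> i iY ni; apply: lt_trans (act i ni); rewrite iY gtr_pMl.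
have [alx0 bey0] : 0 < al * p X /\ 0 < be * p Y.
  by split; rewrite mulr_gt0 // (lt_trans ltr01 al1).
have Ap' : admissible S N th sg n p'.
  split; first by move=> j; rewrite /p' /set_price; do 2?case: ifP.
  split => //; move: dS; rewrite !total_demand_by_cluster !(sum_split_pair _ XY) p'X p'Y.
  rewrite (rest (cluster_demand th sg n)) !cluster_demandE // -/AX -/AY -/BX -/BY.
  have dE : AX / (al * p X) + AY / (be * p Y) = AX / p X + AY / p Y.
    by rewrite -demandE; field; rewrite !gt_eqF // (lt_trans ltr01 al1).
  by rewrite [in E in E -> _]addrACA -dE -addrACA.
have := popt _ _ _ Ap'; rewrite !total_revenue_by_cluster !(sum_split_pair _ XY) p'X p'Y.
rewrite (rest (cluster_revenue th sg n)) !cluster_revenueE // -/AX -/AY -/BX -/BY.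
by apply/negP; rewrite -ltNge; move: gain; lra.
Qed.

Lemma optimal_cluster_balance sg n p X Y mX mY :
  optimal S N th sg n p -> all_active sg n p -> X != Y ->
  sg mX = X -> (0 < n mX)%N -> sg mY = Y -> (0 < n mY)%N ->
  cluster_valuation th sg n X * p Y ^+ 2 * cluster_size sg n Y
    = cluster_valuation th sg n Y * p X ^+ 2 * cluster_size sg n X.
Proof.
move=> opt act XY mXX nmX mYY nmY; have [[p0 _] _] := opt.
have YX : Y != X by rewrite eq_sym.
have e : cluster_valuation th sg n X / p X * (p Y * cluster_size sg n Y)
       = cluster_valuation th sg n Y / p Y * (p X * cluster_size sg n X).
  apply/eqP; rewrite eq_le (optimal_cluster_balance_le opt act XY mXX nmX mYY nmY).
  exact: optimal_cluster_balance_le opt act YX mYY nmY mXX nmX.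
have [x0 y0] := (p0 X, p0 Y).
have -> : cluster_valuation th sg n X * p Y ^+ 2 * cluster_size sg n Y
    = cluster_valuation th sg n X / p X * (p Y * cluster_size sg n Y) * (p X * p Y).
  by field; rewrite gt_eqF.
by rewrite e; field; rewrite gt_eqF.
Qed.

Lemma optimal_cluster_interval sg n p j l k m :
  optimal S N th sg n p -> all_active sg n p ->
  (forall i i', p (sg i) = p (sg i') -> sg i = sg i') ->
  (0 < N k)%N -> (forall i i' : 'I_I, (i < i')%N -> th i' < th i) ->
  (0 < n l)%N -> sg l = j -> (0 < n m)%N -> sg m = j -> (l <= k)%N -> (k <= m)%N ->
  (0 < n k)%N /\ sg k = j.
Proof.
move=> opt act distinct Nk th_dec nl lj nm mj lk km.
have [->|kl] := eqVneq k l; first by [].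
have [->|km'] := eqVneq k m; first by [].
have th_kl : th k < th l by rewrite th_dec // ltn_neqAle eq_sym kl lk.
have th_mk : th m < th k by rewrite th_dec // ltn_neqAle km' km.
have pm : p j < th m by rewrite -mj act.
have nk : (0 < n k)%N := optimal_serves opt mj nm pm Nk (lt_trans pm th_mk).
split => //; have [//|kj] := eqVneq (sg k) j; exfalso.
have jk : j != sg k by rewrite eq_sym.
have pjk : p j != p (sg k).
  by apply: contraNneq kj => pE; rewrite (distinct k l) ?lj.
have [[p0 _] _] := opt.
apply: (interleaved_clusters_absurd (p0 j) (p0 (sg k)) (cluster_size_gt0 lj nl)
  (cluster_size_gt0 (erefl (sg k)) nk) pjk (optimal_cluster_balance opt act jk lj nl (erefl _) nk)
  th_kl th_mk).
- exact: optimal_no_profitable_move opt act (erefl _) jk nk.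
- exact: optimal_no_profitable_move opt act lj kj nl.
- exact: optimal_no_profitable_move opt act mj kj nm.
Qed.

End Optimality.

Section Normalization.
Context {R : realType} {I J : nat} (S : R) (N : 'I_I -> nat) (th : 'I_I -> R).
Implicit Types (sg : 'I_I -> 'I_J) (n : 'I_I -> nat) (p : 'I_J -> R).

(* Groups priced out of the market can be emptied without changing anything. *)
Lemma optimal_all_active sg n p : optimal S N th sg n p ->
  exists n', optimal S N th sg n' p /\ all_active th sg n' p.
Proof.
move=> [[p0 [nN dS]] popt].
pose n' i := if p (sg i) < th i then n i else 0%N.
have same i : (n' i)%:R * user_demand (th i) (p (sg i)) = (n i)%:R * user_demand (th i) (p (sg i)).
  rewrite /n'; case: ltP => // le_th.
  by rewrite user_demand_eq0 ?mulr0.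
have demandE : total_demand th sg n' p = total_demand th sg n p.
  by apply: eq_bigr => i _; exact: same.
have revenueE : total_revenue th sg n' p = total_revenue th sg n p.
  apply: eq_bigr => i _; rewrite -!mul_user_demand //.
  by rewrite mulrCA same mulrCA.
exists n'; split; last by move=> i; rewrite /n'; case: ltP.
split; last by move=> sg2 n2 p2 A2; rewrite revenueE popt.
split => //; split; last by rewrite demandE.
by move=> i; rewrite /n'; case: ltP => // _; exact: nN.
Qed.

(* Clusters sharing a price are merged into one. *)
Lemma optimal_distinct_prices sg n p : optimal S N th sg n p -> all_active th sg n p ->
  exists sg', [/\ optimal S N th sg' n p, all_active th sg' n p &
    forall i i', p (sg' i) = p (sg' i') -> sg' i = sg' i'].
Proof.
move=> [Ap popt] act.
pose canon j := odflt j [pick k | p k == p j].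
have canonE j : p (canon j) = p j by rewrite /canon; case: pickP => //= k /eqP.
have canon_eq j j' : p j = p j' -> canon j = canon j'.
  by move=> e; rewrite /canon e; case: pickP => //= /(_ j'); rewrite eqxx.
pose sg' i := canon (sg i).
have demandE : total_demand th sg' n p = total_demand th sg n p.
  by apply: eq_bigr => i _; rewrite /sg' canonE.
have revenueE : total_revenue th sg' n p = total_revenue th sg n p.
  by apply: eq_bigr => i _; rewrite /sg' canonE.
exists sg'; split.
- split; last by move=> sg2 n2 p2 A2; rewrite revenueE popt.
  by case: Ap => p0 [nN dS]; do 2!split => //; rewrite demandE.
- by move=> i ni; rewrite /sg' canonE act.
- by move=> i i'; rewrite /sg' !canonE => /canon_eq.
Qed.

End Normalization.

Section Assignments.
Context {R : realType} {I J : nat}.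
Implicit Types (sg : 'I_I -> 'I_J) (n : 'I_I -> nat) (p : 'I_J -> R) (a : 'I_I -> 'I_J -> nat).

Definition assignment_of (j0 : 'I_J) a i : 'I_J := odflt j0 [pick j | a i j == 1%N].

Definition indicator sg : 'I_I -> 'I_J -> nat := fun i j => sg i == j.

Lemma group_price_assignment j0 p a i :
  (forall j, (a i j == 0)%N || (a i j == 1)%N) -> (\sum_(j < J) a i j)%N = 1%N ->
  group_price p a i = p (assignment_of j0 a i).
Proof.
move=> a01 a_sum; set k := assignment_of j0 a i.
have ak : a i k = 1%N.
  rewrite /k /assignment_of; case: pickP => [j /eqP //|none]; move: a_sum.
  by rewrite big1 // => j _; have := a01 j; rewrite none orbF => /eqP.
have a0 j : j != k -> a i j = 0%N.
  move=> jk; move: a_sum; rewrite (bigD1 k) //= ak (bigD1 j) ?jk //= => /eqP.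
  by rewrite -[X in _ == X]addn0 eqn_add2l addn_eq0 => /andP [/eqP].
rewrite /group_price (bigD1 k) //= ak mul1r big1 ?addr0 // => j /a0 ->.
by rewrite mul0r.
Qed.

Lemma group_price_indicator p sg i : group_price p (indicator sg) i = p (sg i).
Proof.
rewrite /group_price (bigD1 (sg i)) //= /indicator eqxx mul1r big1 ?addr0 // => j.
by rewrite eq_sym => /negbTE ->; rewrite mul0r.
Qed.

Lemma revenue_total th p a n sg : (forall j, 0 < p j) ->
  (forall i, group_price p a i = p (sg i)) -> revenue th p a n = total_revenue th sg n p.
Proof.
by move=> p0 pa; apply: eq_bigr => i _; rewrite /demand pa -mulrA mul_user_demand.
Qed.

Lemma demand_total th p a n sg : (forall i, group_price p a i = p (sg i)) ->
  \sum_(i < I) (n i)%:R * demand th p a i = total_demand th sg n p.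
Proof. by move=> pa; apply: eq_bigr => i _; rewrite /demand pa. Qed.

Lemma feasible_admissible (S : R) N th j0 p a n : feasible S N th p a n ->
  admissible S N th (assignment_of j0 a) n p.
Proof.
move=> [p0 [a01 [a_sum [nN dS]]]]; do 2!split => //.
by rewrite -(demand_total _ _ (fun i => group_price_assignment j0 p (a01 i) (a_sum i))).
Qed.

Lemma admissible_feasible (S : R) N th sg n p : admissible S N th sg n p ->
  feasible S N th p (indicator sg) n.
Proof.
move=> [p0 [nN dS]]; split => //; split; first by move=> i j; rewrite /indicator; case: (sg i == j).
split; first by move=> i; rewrite (bigD1 (sg i)) //= /indicator eqxx big1 // => j /negbTE; rewrite eq_sym => ->.
by split => //; rewrite (demand_total _ _ (group_price_indicator p sg)).
Qed.

Lemma in_cluster_indicator th sg n p j i : (forall j, 0 < p j) -> all_active th sg n p ->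
  in_cluster th p (indicator sg) n j i <-> (0 < n i)%N /\ sg i = j.
Proof.
move=> p0 act; rewrite /in_cluster /demand group_price_indicator /indicator.
split=> [[pos aij]|[ni /eqP ->]]; last by rewrite mulr_gt0 ?ltr0n ?user_demand_gt0 ?act.
split; last by apply/eqP; move: aij; case: (sg i == j).
by have [n0|//] := posnP (n i); rewrite n0 mul0r ltxx in pos.
Qed.

End Assignments.

Theorem theorem4 (R : realType) (S : R) (I J : nat)
  (N : 'I_I -> nat) (theta : 'I_I -> R) :
  0 < S -> (1 <= I)%N -> (1 <= J)%N -> (J <= I)%N ->
  (forall i, (0 < N i)%N) ->
  (forall i, 0 < theta i) ->
  (forall i k : 'I_I, (i < k)%N -> theta k < theta i) ->
  exists (p : 'I_J -> R) (a : 'I_I -> 'I_J -> nat) (n : 'I_I -> nat),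
    feasible S N theta p a n
    /\ (forall (p' : 'I_J -> R) (a' : 'I_I -> 'I_J -> nat) (n' : 'I_I -> nat),
          feasible S N theta p' a' n' ->
          revenue theta p' a' n' <= revenue theta p a n)
    /\ (forall j : 'I_J, consecutive (in_cluster theta p a n j)).
Proof.
move=> S0 _ J1 _ N0 th0 th_dec; pose j0 : 'I_J := Ordinal J1.
have [sg1 [n1 [p opt1]]] := exists_optimal N S0 th0 j0.
have [n [opt2 act2]] := optimal_all_active opt1.
have [sg [opt act distinct]] := optimal_distinct_prices opt2 act2.
have [[p0 _] popt] := opt.
exists p, (indicator sg), n; split; first exact: admissible_feasible (proj1 opt).
split=> [p' a' n' F'|j l k m].
  have [p'0 [a01 [a_sum _]]] := F'.
  rewrite (revenue_total _ _ p0 (group_price_indicator p sg)).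
  rewrite (revenue_total _ _ p'0 (fun i => group_price_assignment j0 p' (a01 i) (a_sum i))).
  exact/popt/feasible_admissible.
rewrite !in_cluster_indicator // => -[nl lj] [nm mj] lk km.
exact: optimal_cluster_interval opt act distinct (N0 k) th_dec nl lj nm mj lk km.
Qed.
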